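(* Let $A_0$ be a commutative Noetherian ring, $d_1,\dots,d_g\in\mathbb{N}$, and let $A=A_0[Y_1,\dots,Y_g]$ be $\mathbb{Z}^2$-graded by $\deg Y_j=(d_j,1)$. Let $N$ be a finitely generated $\mathbb{Z}^2$-graded $A$-module and $\rho_N(v)=\sup\{i\in\mathbb{Z} : N_{(i,v)}\neq0\}$. Then there exists $v_0$ such that either $\rho_N(v)=-\infty$ for all $v\ge v_0$, or there are $\delta\in\{d_1,\dots,d_g\}$ and $c\in\mathbb{Z}$ with $\rho_N(v)=\delta v+c$ for all $v\ge v_0$.
   Context: Elements of $A_0$ have degree $(0,0)$; the supremum of the empty set is $-\infty$. *)

From mathcomp Require Import all_boot all_order all_algebra.
Set Implicit Arguments. Unset Strict Implicit. Unset Printing Implicit Defensive.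
Import Order.TTheory GRing.Theory Num.Theory.
Local Open Scope ring_scope.

Definition is_ideal (R : comPzRingType) (I : R -> Prop) : Prop :=
  [/\ I 0, (forall x y, I x -> I y -> I (x + y)) & (forall r x, I x -> I (r * x))].

Definition noetherian (R : comPzRingType) : Prop :=
  forall I : nat -> R -> Prop, (forall n, is_ideal (I n)) ->
    (forall n x, I n x -> I n.+1 x) ->
    exists n0, forall n x, (n0 <= n)%N -> I n x -> I n0 x.

Definition is_submod (R : comPzRingType) (M : lmodType R) (P : M -> Prop) : Prop :=
  [/\ P 0, (forall x y, P x -> P y -> P (x + y)) & (forall (a : R) x, P x -> P (a *: x))].

(* H i v is the homogeneous component N_(i,v); M is their internal direct sum. *)
Definition Z2graded (R : comPzRingType) (M : lmodType R) (H : int -> int -> M -> Prop) : Prop :=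
  [/\ (forall i v, is_submod (H i v)),
      (forall x : M, exists (s : seq (int * int)) (f : int * int -> M),
          (forall p, H p.1 p.2 (f p)) /\ x = \sum_(p <- s) f p) &
      (forall (s : seq (int * int)) (f : int * int -> M), uniq s ->
          (forall p, H p.1 p.2 (f p)) -> \sum_(p <- s) f p = 0 ->
          forall p, p \in s -> f p = 0)].

(* The A = A0[Y_1..Y_g]-module M (A0 acting by *:, Y_j acting by Y j)
   is finitely generated: some finite list of elements lies in no proper
   A-submodule. *)
Definition fin_gen (R : comPzRingType) (M : lmodType R) (g : nat) (Y : 'I_g -> M -> M) : Prop :=
  exists gens : seq M, forall P : M -> Prop,
    is_submod P -> (forall j x, P x -> P (Y j x)) ->
    (forall x, x \in gens -> P x) -> forall x, P x.

Definition piece_nz (R : comPzRingType) (M : lmodType R) (H : int -> int -> M -> Prop) (i v : int) : Prop :=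
  exists x, H i v x /\ x <> 0.

Definition rho_is_minfty (R : comPzRingType) (M : lmodType R) (H : int -> int -> M -> Prop) (v : int) : Prop :=
  forall i, ~ piece_nz H i v.

Definition rho_is (R : comPzRingType) (M : lmodType R) (H : int -> int -> M -> Prop) (v r : int) : Prop :=
  piece_nz H r v /\ forall i, r < i -> ~ piece_nz H i v.

(* Let m_1, ..., m_r be homogeneous generators of N.  As the Y_j commute, N is
   spanned over A0 by the homogeneous elements Y^a m_k, so by directness of the
   grading N_(i,v) <> 0 iff Y^a m_k <> 0 for some k and some exponent a with
   deg m_k + (sum_j a_j d_j, |a|) = (i, v).  For fixed k the exponents a with
   Y^a m_k = 0 form an upward closed subset of N^g, finitely generated by Dickson's
   lemma, so its complement is a finite union of boxes (products of intervals
   [0, b_j] and [0, oo)).  On a box, the largest weight sum_j a_j d_j at total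
   degree |a| = v is eventually undefined (bounded box) or delta v + c, with delta
   the largest d_j over the unbounded directions; and a finite union of eventually
   affine suprema is again one, with the slope of the dominating piece. *)

From mathcomp Require Import all_boot all_order all_algebra.
Import Order.TTheory GRing.Theory Num.Theory.
Local Open Scope ring_scope.
From mathcomp Require Import ring zify.
From Stdlib Require Import Classical.
Set Implicit Arguments. Unset Strict Implicit. Unset Printing Implicit Defensive.

(* Exponent vectors are functions [nat -> nat] of which only the entries below [n] matter. *)
Definition le_exp (n : nat) (a b : nat -> nat) := forall j, (j < n)%N -> (a j <= b j)%N.

Lemma not_le_exp n l a : ~ le_exp n l a <-> exists2 j, (j < n)%N & (a j < l j)%N.
Proof.
split=> [nle|[j lt_j lt_a] le_la]; last by have := le_la j lt_j; rewrite leqNgt lt_a.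
apply: NNPP => nlt; apply: nle => j lt_j; rewrite leqNgt; apply/negP => lt_a.
by apply: nlt; exists j.
Qed.

Definition upset n (U : (nat -> nat) -> Prop) := forall a b, le_exp n a b -> U a -> U b.

Definition covers n (U C : (nat -> nat) -> Prop) k (L : nat -> nat -> nat) :=
  (forall s, (s < k)%N -> U (L s)) /\
  forall a, U a -> C a -> exists2 s, (s < k)%N & le_exp n (L s) a.

Definition finitely_based n U := exists k L, covers n U (fun _ => True) k L.

Lemma coversU n U C1 C2 k1 L1 k2 L2 : covers n U C1 k1 L1 -> covers n U C2 k2 L2 ->
  covers n U (fun a => C1 a \/ C2 a) (k1 + k2)
    (fun s => if (s < k1)%N then L1 s else L2 (s - k1)%N).
Proof.
move=> [UL1 cov1] [UL2 cov2]; split=> [s lt_s|a Ua [/(cov1 a Ua)|/(cov2 a Ua)] [s lt_s le_s]].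
- by case: ltnP => le_s; [apply: UL1 | apply: UL2; lia].
- by exists s; rewrite ?lt_s //; lia.
- by exists (k1 + s)%N; rewrite ?ltnNge ?leq_addr ?addKn //; lia.
Qed.

Lemma covers_sub n U C C' k L :
  (forall a, C a -> C' a) -> covers n U C' k L -> covers n U C k L.
Proof. by move=> CC' [UL cov]; split=> // a Ua /CC'; apply: cov. Qed.

Section DicksonStep.
Variable n : nat.
Hypothesis IHn : forall U, upset n U -> finitely_based n U.
Variable U : (nat -> nat) -> Prop.
Hypothesis upset_U : upset n.+1 U.

Definition set_last (b : nat -> nat) t j := if j == n then t else b j.

Definition slice t b := U (set_last b t).

Lemma upset_slice t : upset n (slice t).
Proof.
move=> a b le_ab; apply: upset_U => j; rewrite /set_last ltnS leq_eqVlt.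
by case: eqP => //= _ /le_ab.
Qed.

Lemma slice_mono t t' b : (t <= t')%N -> slice t b -> slice t' b.
Proof. by move=> le_t; apply: upset_U => j _; rewrite /set_last; case: eqP. Qed.

Lemma slice_self a : U a -> slice (a n) a.
Proof. by apply: upset_U => j _; rewrite /set_last; case: eqP => [->|]. Qed.

Lemma covers_slice t (C : (nat -> nat) -> Prop) :
  (forall a, U a -> C a -> (t <= a n)%N /\ slice t a) ->
  exists k L, covers n.+1 U C k L.
Proof.
move=> hC; have [k [L [UL cov]]] := IHn (@upset_slice t).
exists k, (fun s => set_last (L s) t); split=> [s /UL //|a Ua Ca].
have [le_t /cov[// | s lt_s le_s]] := hC a Ua Ca; exists s => // j.
by rewrite ltnS leq_eqVlt /set_last; case: eqP => [->|_ /= /le_s].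
Qed.

Lemma finitely_based_step : finitely_based n.+1 U.
Proof.
have upset_slices : upset n (fun b => exists t, slice t b).
  by move=> a b le_ab [t Ut]; exists t; apply: upset_slice le_ab Ut.
have [kI [LI [slice_LI cov_I]]] := IHn upset_slices.
have [T sliceT] : exists T, forall s, (s < kI)%N -> slice T (LI s).
  elim: kI {cov_I} slice_LI => [|k IHk] sl; first by exists 0%N.
  have [T1 h1] := IHk (fun s lt_s => sl s (ltnW lt_s)); have [t2 h2] := sl k (ltnSn k).
  exists (maxn T1 t2) => s; rewrite ltnS leq_eqVlt => /orP[/eqP->|/h1].
    by apply: slice_mono h2; apply: leq_maxr.
  by apply: slice_mono; apply: leq_maxl.
have [k1 [L1 cov1]] : exists k L, covers n.+1 U (fun a => a n < T)%N k L.
  elim: (T) => [|t [k1 [L1 cov1]]]; first by exists 0%N, (fun _ _ => 0%N).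
  have [k2 [L2 cov2]] : exists k L, covers n.+1 U (fun a => a n = t) k L.
    by apply: (@covers_slice t) => a Ua <-; split=> //; apply: slice_self.
  do 2 eexists; apply: covers_sub (coversU cov1 cov2) => a.
  by rewrite ltnS leq_eqVlt => /orP[/eqP|]; auto.
have [k2 [L2 cov2]] : exists k L, covers n.+1 U (fun a => T <= a n)%N k L.
  apply: (@covers_slice T) => a Ua le_T; split=> //.
  have [s lt_s le_s] := cov_I a (ex_intro _ (a n) (slice_self Ua)) I.
  exact: upset_slice le_s (sliceT s lt_s).
do 2 eexists; apply: covers_sub (coversU cov1 cov2) => a _.
by case: (ltnP (a n) T); auto.
Qed.

End DicksonStep.

Lemma dickson n U : upset n U -> finitely_based n U.
Proof.
elim: n U => [|n IH] U upset_U; last exact: finitely_based_step.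
case: (classic (exists a, U a)) => [[a Ua]|noU].
  by exists 1%N, (fun _ => a); split=> // b _ _; exists 0%N.
by exists 0%N, (fun _ _ => 0%N); split=> // b Ub; case: noU; exists b.
Qed.

(* Reading [P v i] as N_(i,v) <> 0, [top_at P v r] says rho_N(v) = r. *)
Definition top_at (P : int -> int -> Prop) (v r : int) :=
  P v r /\ forall i, r < i -> ~ P v i.

Section EventuallyLinear.
Variable slope : int -> Prop.

Definition eventually_linear (P : int -> int -> Prop) := exists v0 : int,
  (forall v, v0 <= v -> forall i, ~ P v i) \/
  (exists s c, slope s /\ forall v, v0 <= v -> top_at P v (s * v + c)).

Lemma eventually_linear_ext P Q :
  (forall v i, P v i <-> Q v i) -> eventually_linear P -> eventually_linear Q.
Proof.
move=> PQ [v0 [P0|[s [c [hs Ptop]]]]]; exists v0; [left|right].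
  by move=> v hv i /PQ; apply: P0.
exists s, c; split=> // v /Ptop[Pr Pgt]; split=> [|i /Pgt Pi /PQ //].
exact/PQ.
Qed.

Lemma eventually_linear0 : eventually_linear (fun _ _ => False).
Proof. by exists 0; left => v _ i. Qed.

Lemma eventually_linear_andl (Q : Prop) P :
  eventually_linear P -> eventually_linear (fun v i => Q /\ P v i).
Proof.
move=> hP; case: (classic Q) => q.
  by apply: eventually_linear_ext hP => v i; tauto.
by apply: eventually_linear_ext eventually_linear0 => v i; tauto.
Qed.

Lemma eventually_linear_shift P (a b : int) :
  eventually_linear P -> eventually_linear (fun v i => P (v - b) (i - a)).
Proof.
move=> [v0 [P0|[s [c [hs Ptop]]]]]; exists (v0 + b); [left|right].
  by move=> v hv i; apply: P0; lia.
exists s, (c + a - s * b); split=> // v hv.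
have [Pr Pgt] := Ptop (v - b) ltac:(lia).
have sh : s * v + (c + a - s * b) - a = s * (v - b) + c by ring.
split=> [|i hi]; first by rewrite sh.
by apply: Pgt; rewrite -sh; lia.
Qed.

Lemma top_at_or P Q v r r' :
  top_at P v r -> top_at Q v r' -> r' <= r -> top_at (fun v i => P v i \/ Q v i) v r.
Proof.
move=> [Pr Pgt] [_ Qgt] le_r'r; split=> [|i hi [/Pgt|/Qgt]]; [by left|exact|].
by apply; lia.
Qed.

Lemma affine_eventually_le (s1 s2 c1 c2 : int) : s2 < s1 \/ (s2 = s1 /\ c2 <= c1) ->
  exists w, forall v, w <= v -> s2 * v + c2 <= s1 * v + c1.
Proof.
case=> [lt_s|[-> le_c]]; last by exists 0 => v _; lia.
exists `|c2 - c1| => v hv.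
have : 0 <= (s1 - s2 - 1) * v by apply: mulr_ge0; lia.
have : c2 - c1 <= `|c2 - c1| by apply: ler_norm.
nia.
Qed.

Lemma eventually_linearU_dom P Q v1 v2 w s1 c1 s2 c2 : slope s1 ->
  (forall v, v1 <= v -> top_at P v (s1 * v + c1)) ->
  (forall v, v2 <= v -> top_at Q v (s2 * v + c2)) ->
  (forall v, w <= v -> s2 * v + c2 <= s1 * v + c1) ->
  eventually_linear (fun v i => P v i \/ Q v i).
Proof.
move=> hs1 Ptop Qtop le_w; exists (Num.max (Num.max v1 v2) w); right.
exists s1, c1; split=> // v hv.
by apply: top_at_or; [apply: Ptop | apply: Qtop | apply: le_w]; lia.
Qed.

Lemma eventually_linearU P Q : eventually_linear P -> eventually_linear Q ->
  eventually_linear (fun v i => P v i \/ Q v i).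
Proof.
move=> [v1 [P0|[s1 [c1 [hs1 Ptop]]]]] [v2 [Q0|[s2 [c2 [hs2 Qtop]]]]].
- exists (Num.max v1 v2); left => v hv i [/P0|/Q0]; apply; lia.
- exists (Num.max v1 v2); right; exists s2, c2; split=> // v hv.
  have [Qr Qgt] := Qtop v ltac:(lia).
  by split=> [|i hi [|/Qgt]]; [right | apply: P0; lia | apply].
- exists (Num.max v1 v2); right; exists s1, c1; split=> // v hv.
  have [Pr Pgt] := Ptop v ltac:(lia).
  by split=> [|i hi [/Pgt|]]; [left | apply | apply: Q0; lia].
- have [/affine_eventually_le[w le_w]|/affine_eventually_le[w le_w]] :
      (s2 < s1 \/ (s2 = s1 /\ c2 <= c1)) \/ (s1 < s2 \/ (s1 = s2 /\ c1 <= c2)).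
    case: (ltgtP s2 s1) => [_|_|->]; [by left; left | by right; left |].
    by case: (lerP c2 c1) => hc; [left | right]; right; split=> //; lia.
  + exact: eventually_linearU_dom hs1 Ptop Qtop le_w.
  + apply: eventually_linear_ext (eventually_linearU_dom hs2 Qtop Ptop le_w) => v i.
    tauto.
Qed.

Lemma eventually_linear_bigU (P : nat -> int -> int -> Prop) n :
  (forall k, (k < n)%N -> eventually_linear (P k)) ->
  eventually_linear (fun v i => exists2 k, (k < n)%N & P k v i).
Proof.
elim: n => [|n IH] hP.
  by apply: eventually_linear_ext eventually_linear0 => v i; split=> // [][].
have hU := eventually_linearU (IH (fun k hk => hP k (ltnW hk))) (hP n (ltnSn n)).
apply: eventually_linear_ext hU => v i; split.
  by case=> [[k hk Pk]|Pn]; [exists k => //; apply: ltnW | exists n].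
case=> k; rewrite ltnS leq_eqVlt => /orP[/eqP-> Pn|hk Pk]; [by right | left].
by exists k.
Qed.

End EventuallyLinear.

Section Exponents.
Variables (g : nat) (dn : nat -> nat).

Definition tdeg (a : nat -> nat) : int := \sum_(j < g) (a j)%:Z.
Definition wdeg (a : nat -> nat) : int := \sum_(j < g) (a j)%:Z * (dn j)%:Z.

Definition degrees (S : (nat -> nat) -> Prop) (v i : int) :=
  exists a, S a /\ v = tdeg a /\ i = wdeg a.

Definition is_weight (s : int) := exists2 j, (j < g)%N & s = (dn j)%:Z.

Definition in_box (c : nat -> option nat) (a : nat -> nat) :=
  forall j m, (j < g)%N -> c j = Some m -> (a j <= m)%N.

Lemma degreesS S S' v i : (forall a, S a -> S' a) -> degrees S v i -> degrees S' v i.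
Proof. by move=> SS' [a [/SS' Sa e]]; exists a. Qed.

Section FreeDirection.
Variables (c : nat -> option nat) (jm : 'I_g).
Hypothesis c_jm : c jm = None.
Hypothesis jm_max : forall j : 'I_g, c j = None -> (dn j <= dn jm)%N.

Definition excess (a : nat -> nat) : int :=
  \sum_(j < g) (a j)%:Z * ((dn j)%:Z - (dn jm)%:Z).

Lemma wdeg_excess a : wdeg a = (dn jm)%:Z * tdeg a + excess a.
Proof.
rewrite /wdeg /tdeg /excess mulr_sumr -big_split /=.
by apply: eq_bigr => j _; ring.
Qed.

(* At total degree [v], the weight is maximised by filling every bounded direction
   heavier than [jm] up to its bound and putting the remaining degree on [jm]. *)
Definition corner (j : nat) : nat :=
  if c j is Some m then (if (dn jm < dn j)%N then m else 0%N) else 0%N.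

Lemma excess_le_corner a : in_box c a -> excess a <= excess corner.
Proof.
move=> box_a; apply: ler_sum => j _; rewrite /corner.
case e: (c j) => [m|].
  by have := box_a j m (ltn_ord j) e; case: ltnP => dj; nia.
by have := jm_max e; nia.
Qed.

Lemma corner_top v : tdeg corner <= v ->
  top_at (degrees (in_box c)) v ((dn jm)%:Z * v + excess corner).
Proof.
move=> le_v; split; last first.
  move=> i lt_i [a [box_a [ev ei]]]; move: lt_i.
  by rewrite ev ei wdeg_excess ltrD2l ltNge excess_le_corner.
have [n ->] : exists n : nat, v = tdeg corner + n%:Z.
  by exists `|v - tdeg corner|%N; lia.
pose a j := if j == nat_of_ord jm then n else corner j.
have corner_jm : corner jm = 0%N by rewrite /corner c_jm.
have sum_a (F : nat -> int -> int) : (forall j, F j 0 = 0) ->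
    \sum_(j < g) F j (a j)%:Z = \sum_(j < g) F j (corner j)%:Z + F jm n%:Z.
  move=> F0; rewrite [LHS](bigD1 jm) // [X in _ = X + _](bigD1 jm) //= corner_jm F0.
  rewrite /a eqxx add0r addrC; congr (_ + _); apply: eq_bigr => j.
  by rewrite (inj_eq val_inj) => /negbTE->.
exists a; split; [|split].
- move=> j m _; rewrite /a; case: eqP => [->|_]; first by rewrite c_jm.
  by rewrite /corner => ->; case: ltnP.
- by rewrite /tdeg (sum_a (fun _ x => x)).
- rewrite wdeg_excess /tdeg (sum_a (fun _ x => x)) // -/(tdeg corner).
  rewrite /excess (sum_a (fun j x => x * ((dn j)%:Z - (dn jm)%:Z))) => [|j]; last first.
    by rewrite mul0r.
  by rewrite subrr mulr0 addr0.
Qed.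

End FreeDirection.

Lemma eventually_linear_box c : eventually_linear is_weight (degrees (in_box c)).
Proof.
case: (classic (exists j0 : 'I_g, c j0 = None)) => [[j0 c_j0]|bounded].
  have [jm /eqP c_jm jm_max] := @arg_maxnP _ j0 (fun j => c j == None) dn (introT eqP c_j0).
  exists (tdeg (corner c jm)); right; exists (dn jm)%:Z, (excess jm (corner c jm)).
  split; first by exists jm.
  by move=> v; apply: corner_top => // j /eqP /jm_max.
exists (\sum_(j < g) (odflt 0%N (c j))%:Z + 1); left => v le_v i [a [box_a [ev _]]].
have : tdeg a <= \sum_(j < g) (odflt 0%N (c j))%:Z.
  apply: ler_sum => j _; case e: (c j) => [m|] /=; first by rewrite lez_nat; apply: box_a e.
  by case: bounded; exists j.
lia.
Qed.

Definition avoids (L : nat -> nat -> nat) (k : nat) (a : nat -> nat) :=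
  forall s, (s < k)%N -> ~ le_exp g (L s) a.

Definition shrink (c : nat -> option nat) (j m : nat) : nat -> option nat :=
  fun k => if k == j then Some (if c j is Some m' then minn m' m else m) else c k.

Lemma in_box_shrink j c m a : (j < g)%N ->
  in_box (shrink c j m) a <-> in_box c a /\ (a j <= m)%N.
Proof.
move=> lt_j; have box_j b : in_box (shrink c j m) b ->
    (b j <= if c j is Some m' then minn m' m else m)%N.
  by move=> box_b; apply: box_b lt_j _; rewrite /shrink eqxx.
split=> [box_a|[box_a le_m] k m' lt_k].
  have box_aj := box_j a box_a; split; last first.
    by move: box_aj; case: (c j) => [m'|] //; rewrite leq_min => /andP[].
  move=> k m' lt_k e; case: (eqVneq k j) => [ekj|nkj].
    by move: box_aj; rewrite -ekj e leq_min => /andP[].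
  by apply: box_a lt_k _; rewrite /shrink (negbTE nkj).
rewrite /shrink; case: eqP => [-> [<-]|_]; last exact: box_a.
by case e: (c j) => [m''|//]; rewrite leq_min le_m (box_a j m'').
Qed.

Lemma avoidsS L k a :
  avoids L k.+1 a <-> avoids L k a /\ exists2 j, (j < g)%N & (a j < L k j)%N.
Proof.
rewrite -not_le_exp; split=> [av|[av nle] s].
  by split=> [s lt_s|]; apply: av => //; apply: ltnW.
by rewrite ltnS leq_eqVlt => /orP[/eqP->|/av].
Qed.

Lemma eventually_linear_box_avoids L k c :
  eventually_linear is_weight (degrees (fun a => in_box c a /\ avoids L k a)).
Proof.
elim: k c => [|k IH] c.
  apply: eventually_linear_ext (eventually_linear_box c) => v i.
  have av0 a : avoids L 0 a by [].
  by split; apply: degreesS => a; have := av0 a; tauto.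
apply: (@eventually_linear_ext _ (fun v i => exists2 j, (j < g)%N &
    (0 < L k j)%N /\ degrees (fun a => in_box (shrink c j (L k j).-1) a /\ avoids L k a) v i)).
  move=> v i; split.
    case=> j lt_j [pos [a [[/(in_box_shrink _ _ _ lt_j)[box_a le_a] av] e]]].
    by exists a; split=> //; split=> //; apply/avoidsS; split=> //; exists j => //; lia.
  case=> a [[box_a /avoidsS[av [j lt_j lt_a]]] e]; exists j => //; split; first lia.
  by exists a; split=> //; split=> //; apply/in_box_shrink => //; split=> //; lia.
apply: eventually_linear_bigU => j _; apply: eventually_linear_andl; exact: IH.
Qed.

Lemma eventually_linear_not_upset U : upset g U ->
  eventually_linear is_weight (degrees (fun a => ~ U a)).
Proof.
move=> upset_U; have [k [L [UL cov]]] := dickson upset_U.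
apply: eventually_linear_ext (eventually_linear_box_avoids L k (fun _ => None)) => v i.
split; apply: degreesS => a.
  by case=> _ av Ua; have [s lt_s le_s] := cov a Ua I; apply: av le_s.
by move=> nUa; split=> // s lt_s le_s; apply: nUa (upset_U _ _ le_s (UL s lt_s)).
Qed.

End Exponents.

Fixpoint monomial (T : Type) (f : nat -> T -> T) (n : nat) (a : nat -> nat) (x : T) : T :=
  if n is n'.+1 then monomial f n' a (iter (a n') (f n') x) else x.

Section Monomials.
Variables (T : Type) (f : nat -> T -> T).

Lemma eq_monomial n a b x :
  (forall j, (j < n)%N -> a j = b j) -> monomial f n a x = monomial f n b x.
Proof.
elim: n x => [|n IH] x eq_ab //=.
by rewrite eq_ab // IH // => j lt_j; apply: eq_ab; apply: ltnW.
Qed.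

Lemma monomial_exp0 n x : monomial f n (fun _ => 0%N) x = x.
Proof. by elim: n x => [|n IH] x //=. Qed.

Lemma monomial_fix n a y : (forall j, f j y = y) -> monomial f n a y = y.
Proof. by move=> fy; elim: n => [|n IH] //=; rewrite iter_fix. Qed.

Lemma iter_comm (h k : T -> T) n y : (forall y, h (k y) = k (h y)) ->
  h (iter n k y) = iter n k (h y).
Proof. by move=> hk; elim: n => [|n IH] //=; rewrite hk IH. Qed.

Lemma monomial_comm (h : T -> T) n a y :
  (forall j y, (j < n)%N -> h (f j y) = f j (h y)) -> h (monomial f n a y) = monomial f n a (h y).
Proof.
elim: n y => [|n IH] y hf //=.
rewrite IH => [|j z lt_j]; last by apply: hf; apply: ltnW.
by rewrite iter_comm // => z; apply: hf.
Qed.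

Lemma monomialD n a b x :
  (forall j k y, (j < n)%N -> (k < n)%N -> f j (f k y) = f k (f j y)) ->
  monomial f n (fun j => a j + b j)%N x = monomial f n b (monomial f n a x).
Proof.
elim: n x => [|n IH] x fC //=.
rewrite IH => [|j k y lt_j lt_k]; last by apply: fC; apply: ltnW.
rewrite [in RHS](@monomial_comm (iter (b n) (f n))) => [|j y lt_j].
  by rewrite addnC iterD.
by rewrite iter_comm // => z; apply: fC => //; apply: ltnW.
Qed.

Lemma monomial_delta n j y : (j < n)%N ->
  monomial f n (fun k => nat_of_bool (k == j)) y = f j y.
Proof.
elim: n y => [|n IH] y //; rewrite ltnS leq_eqVlt => /orP[/eqP->|lt_j] /=.
  rewrite eqxx (@eq_monomial _ _ (fun _ => 0%N)) ?monomial_exp0 // => k lt_k.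
  by rewrite ltn_eqF.
by rewrite gtn_eqF // IH.
Qed.

End Monomials.

Lemma sum_group_by (V : nmodType) (T : Type) (K : eqType) (D : seq K) (key : T -> K)
    (f : T -> V) (s : seq T) :
  uniq D -> {subset map key s <= D} ->
  \sum_(k <- D) \sum_(t <- s | key t == k) f t = \sum_(t <- s) f t.
Proof.
move=> uD; under eq_bigr do rewrite big_mkcond; rewrite exchange_big /=.
elim: s => [|t s IH] sD; rewrite ?big_nil // !big_cons IH => [|k ks]; last first.
  by apply: sD; rewrite /= mem_behead.
have Dt : key t \in D by apply: sD; rewrite /= mem_head.
rewrite (bigD1_seq (key t)) //= eqxx big1 ?addr0 // => k /negbTE.
by rewrite eq_sym => ->.
Qed.

Lemma submod_sum (R : comPzRingType) (M : lmodType R) (P : M -> Prop) (T : Type)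
    (s : seq T) (Q : pred T) (f : T -> M) :
  is_submod P -> (forall t, Q t -> P (f t)) -> P (\sum_(t <- s | Q t) f t).
Proof. by case=> P0 PD _ PF; apply: big_ind. Qed.

Lemma Z2graded_component (R : comPzRingType) (M : lmodType R) (H : int -> int -> M -> Prop)
    (T : Type) (s : seq T) (deg : T -> int * int) (f : T -> M) (q : int * int) (x : M) :
  Z2graded H -> (forall t, H (deg t).1 (deg t).2 (f t)) -> H q.1 q.2 x ->
  x = \sum_(t <- s) f t -> x = \sum_(t <- s | deg t == q) f t.
Proof.
move=> [Hsub _ Hind] Hf Hx ex.
pose F p := (if p == q then - x else 0) + \sum_(t <- s | deg t == p) f t.
pose D := undup (q :: map deg s).
have qD : q \in D by rewrite mem_undup mem_head.
have FH p : H p.1 p.2 (F p).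
  have [H0 HD _] := Hsub p.1 p.2; apply: HD; last by apply: submod_sum => // t /eqP <-.
  case: eqP => [->|_] //; have [_ _ HZ] := Hsub q.1 q.2.
  by rewrite -scaleN1r; apply: HZ.
have sumF : \sum_(p <- D) F p = 0.
  rewrite big_split /= (bigD1_seq q) ?undup_uniq //= eqxx.
  rewrite big1 => [|r /negbTE-> //]; rewrite sum_group_by ?undup_uniq -?ex ?addr0 ?addNr //.
  by move=> p sp; rewrite mem_undup in_cons sp orbT.
have := Hind D F (undup_uniq _) FH sumF q qD; rewrite /F eqxx => /eqP.
by rewrite addrC addr_eq0 opprK => /eqP.
Qed.

Definition ext_ord (T : Type) (n : nat) (x0 : T) (f : 'I_n -> T) (j : nat) : T :=
  if insub j is Some o then f o else x0.

Lemma ext_ord_val T n x0 (f : 'I_n -> T) (o : 'I_n) : ext_ord x0 f o = f o.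
Proof. by rewrite /ext_ord valK. Qed.

Section GradedModule.
Variables (A0 : comPzRingType) (M : lmodType A0) (g : nat) (d : 'I_g -> nat).
Variables (Y : 'I_g -> M -> M) (H : int -> int -> M -> Prop).
Hypothesis Y_lin : forall j (a : A0) x y, Y j (a *: x + y) = a *: Y j x + Y j y.
Hypothesis Y_comm : forall j k x, Y j (Y k x) = Y k (Y j x).
Hypothesis H_graded : Z2graded H.
Hypothesis Y_deg : forall j i v x, H i v x -> H (i + (d j)%:Z) (v + 1) (Y j x).

Let Yn := ext_ord id Y.
Let dn := ext_ord 0%N d.

Lemma Y_add j x y : Y j (x + y) = Y j x + Y j y.
Proof. by rewrite -{1}(scale1r x) Y_lin scale1r. Qed.

Lemma Y0 j : Y j 0 = 0.
Proof. by apply: (addrI (Y j 0)); rewrite -Y_add !addr0. Qed.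

Lemma Y_sum j (T : Type) (s : seq T) (a : T -> A0) (f : T -> M) :
  Y j (\sum_(t <- s) a t *: f t) = \sum_(t <- s) a t *: Y j (f t).
Proof. by elim: s => [|t s IH]; rewrite ?big_nil ?Y0 // !big_cons Y_lin IH. Qed.

Lemma Yn_comm j k x : Yn j (Yn k x) = Yn k (Yn j x).
Proof. by rewrite /Yn /ext_ord; case: insub => [oj|]; case: insub => [ok|]. Qed.

Lemma monomial_Yn0 n al : monomial Yn n al 0 = 0.
Proof.
by apply: monomial_fix => j; rewrite /Yn /ext_ord; case: insub => [o|] //=; apply: Y0.
Qed.

Lemma Y_monomial (o : 'I_g) al y :
  Y o (monomial Yn g al y) = monomial Yn g (fun j => al j + (j == o))%N y.
Proof.
rewrite monomialD => [|j k z _ _]; last exact: Yn_comm.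
by rewrite monomial_delta // /Yn ext_ord_val.
Qed.

Lemma upset_monomial_eq0 y : upset g (fun al => monomial Yn g al y = 0).
Proof.
move=> al be le_al al0; rewrite (@eq_monomial _ _ _ be (fun j => al j + (be j - al j))%N).
  by rewrite monomialD => [|j k z _ _]; rewrite ?al0 ?monomial_Yn0 // Yn_comm.
by move=> j lt_j; rewrite subnKC // le_al.
Qed.

Lemma iter_Y_hom (o : 'I_g) k i v x :
  H i v x -> H (i + k%:Z * (d o)%:Z) (v + k%:Z) (iter k (Y o) x).
Proof.
elim: k => [|k IH] Hx /=; first by rewrite mul0r !addr0.
have := Y_deg o (IH Hx); congr H; lia.
Qed.

Lemma monomial_hom n al i v x : (n <= g)%N -> H i v x ->
  H (i + wdeg n dn al) (v + tdeg n al) (monomial Yn n al x).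
Proof.
elim: n i v x => [|n IH] i v x le_n Hx /=; first by rewrite /wdeg /tdeg !big_ord0 !addr0.
have := IH _ _ _ (ltnW le_n) (iter_Y_hom (Ordinal le_n) (al n) Hx).
rewrite /wdeg /tdeg !big_ord_recr /= /Yn /dn !(ext_ord_val _ _ (Ordinal le_n)).
by rewrite !addrA ![_ + _ + (al n)%:Z * _]addrAC ![_ + _ + (al n)%:Z]addrAC.
Qed.

Lemma homogeneous_generators : fin_gen Y -> exists ng (m : nat -> M) (e : nat -> int * int),
  (forall k, H (e k).1 (e k).2 (m k)) /\ (forall k, (ng <= k)%N -> m k = 0) /\
  forall P, is_submod P -> (forall j x, P x -> P (Y j x)) ->
    (forall k, (k < ng)%N -> P (m k)) -> forall x, P x.
Proof.
case: H_graded => Hsub Hdec _ [gens gen_all].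
have [hs [hs_hom hs_gen]] : exists hs : seq (M * (int * int)),
    (forall h, h \in hs -> H h.2.1 h.2.2 h.1) /\
    (forall P, is_submod P -> (forall h, h \in hs -> P h.1) -> forall x, x \in gens -> P x).
  elim: gens {gen_all} => [|x gs [hs [hom gen]]]; first by exists [::].
  have [s [f [Hf ->]]] := Hdec x.
  exists ([seq (f p, p) | p <- s] ++ hs); split.
    by move=> h; rewrite mem_cat => /orP[/mapP[p _ ->]|/hom].
  move=> P subP Phs y; rewrite in_cons => /orP[/eqP->|gs_y].
    rewrite big_seq; apply: submod_sum => // p s_p.
    by apply: (Phs (f p, p)); rewrite mem_cat map_f.
  by apply: gen => // h hs_h; apply: Phs; rewrite mem_cat hs_h orbT.
exists (size hs), (fun k => (nth (0, (0, 0)) hs k).1), (fun k => (nth (0, (0, 0)) hs k).2).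
split; last split.
- move=> k; case: (ltnP k (size hs)) => [lt_k|le_k]; first exact/hs_hom/mem_nth.
  by rewrite nth_default //; case: (Hsub 0 0).
- by move=> k le_k; rewrite nth_default.
- move=> P subP PY Pm; apply: gen_all => // x /hs_gen; apply=> // h.
  by case/(nthP (0, (0, 0))) => k lt_k <-; apply: Pm.
Qed.

Section Generators.
Variables (ng : nat) (m : nat -> M) (e : nat -> int * int).
Hypothesis m_hom : forall k, H (e k).1 (e k).2 (m k).
Hypothesis m_out : forall k, (ng <= k)%N -> m k = 0.
Hypothesis m_gen : forall P, is_submod P -> (forall j x, P x -> P (Y j x)) ->
  (forall k, (k < ng)%N -> P (m k)) -> forall x, P x.

(* The triple (a, k, al) stands for a *: Y^al m_k. *)
Let term (t : A0 * nat * (nat -> nat)) := t.1.1 *: monomial Yn g t.2 (m t.1.2).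
Let term_deg (t : A0 * nat * (nat -> nat)) :=
  ((e t.1.2).1 + wdeg g dn t.2, (e t.1.2).2 + tdeg g t.2).

Lemma term_hom t : H (term_deg t).1 (term_deg t).2 (term t).
Proof.
have [Hsub _ _] := H_graded; have [_ _ HZ] := Hsub (term_deg t).1 (term_deg t).2.
exact/HZ/monomial_hom.
Qed.

Lemma monomial_span x : exists s, x = \sum_(t <- s) term t.
Proof.
move: x; apply: m_gen => [|j _ [s ->]|k _]; first split.
- by exists [::]; rewrite big_nil.
- by move=> _ _ [s1 ->] [s2 ->]; exists (s1 ++ s2); rewrite big_cat.
- move=> c _ [s ->]; exists [seq (c * t.1.1, t.1.2, t.2) | t <- s].
  by rewrite big_map scaler_sumr; apply: eq_bigr => t _; rewrite /term scalerA.
- exists [seq (t.1.1, t.1.2, fun k : nat => t.2 k + (k == j))%N | t <- s].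
  by rewrite Y_sum big_map; apply: eq_bigr => t _; rewrite Y_monomial.
- exists [:: (1, k, fun _ => 0%N)].
  by rewrite big_seq1 /term scale1r monomial_exp0.
Qed.

Lemma piece_nzE i v : piece_nz H i v <-> exists2 k, (k < ng)%N &
  degrees g dn (fun al => monomial Yn g al (m k) <> 0) (v - (e k).2) (i - (e k).1).
Proof.
split=> [[x [Hx nx]]|[k lt_k [al [nz [ev ei]]]]]; last first.
  exists (monomial Yn g al (m k)); split=> //.
  have -> : i = (e k).1 + wdeg g dn al by lia.
  have -> : v = (e k).2 + tdeg g al by lia.
  exact: monomial_hom.
apply: NNPP => none; apply: nx; have [s ex] := monomial_span x.
rewrite (Z2graded_component (q := (i, v)) H_graded term_hom Hx ex).
apply: big1 => t /eqP[ei ev]; rewrite /term.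
case: (ltnP t.1.2 ng) => [lt_k|/m_out->]; last by rewrite monomial_Yn0 scaler0.
have [->|nz] := eqVneq (monomial Yn g t.2 (m t.1.2)) 0; first by rewrite scaler0.
by case: none; exists t.1.2 => //; exists t.2; split; [apply/eqP | split; lia].
Qed.

Lemma eventually_linear_pieces :
  eventually_linear (is_weight g dn) (fun v i => piece_nz H i v).
Proof.
apply: eventually_linear_ext (fun v i => iff_sym (piece_nzE i v)) _.
apply: eventually_linear_bigU => k _.
apply: (@eventually_linear_shift _ _ (e k).1 (e k).2).
exact: (eventually_linear_not_upset dn (@upset_monomial_eq0 (m k))).
Qed.

End Generators.
End GradedModule.

Theorem lemma3p3 (A0 : comPzRingType) (g : nat) (d : 'I_g -> nat)
    (M : lmodType A0) (Y : 'I_g -> M -> M) (H : int -> int -> M -> Prop) :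
  noetherian A0 ->
  (forall j (a : A0) (x y : M), Y j (a *: x + y) = a *: Y j x + Y j y) ->
  (forall j k (x : M), Y j (Y k x) = Y k (Y j x)) ->
  Z2graded H ->
  (forall j i v x, H i v x -> H (i + (d j)%:Z) (v + 1) (Y j x)) ->
  fin_gen Y ->
  exists v0 : int,
    (forall v, v0 <= v -> rho_is_minfty H v) \/
    (exists (j : 'I_g) (c : int), forall v, v0 <= v -> rho_is H v ((d j)%:Z * v + c)).
Proof.
move=> _ Y_lin Y_comm H_graded Y_deg.
move=> /(homogeneous_generators H_graded)[ng [m [e [m_hom [m_out m_gen]]]]].
have [v0 [none|[s [c [[j lt_j ->] top]]]]] :=
  eventually_linear_pieces Y_lin Y_comm H_graded Y_deg m_hom m_out m_gen.
  by exists v0; left.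
exists v0; right; exists (Ordinal lt_j), c => v /top.
by rewrite (ext_ord_val _ _ (Ordinal lt_j)).
Qed.
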